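(* Let $\mathcal{K}=\mathbb{F}_q((t))$, $\mathcal{O}=\mathbb{F}_q[[t]]$ and $G=PGL(2,\mathcal{K})$. Let $B(\mathcal{K})\subset G$ be the subgroup of (classes of) upper triangular matrices, let $$I^0=\left\{\begin{pmatrix}1+ta & b\\ tc & 1+td\end{pmatrix} : a,b,c,d\in\mathcal{O}\right\}\subset G,$$ and let $A\subset G$ be the subgroup generated by $I^0$ and $\sigma=\begin{pmatrix}0&1\\ t&0\end{pmatrix}$. Then $PGL(2,\mathcal{K})=B(\mathcal{K})\cdot A$. *)

From HB Require Import structures.
From mathcomp Require Import all_boot all_order all_algebra.
From mathcomp Require Import boolp.
Set Implicit Arguments. Unset Strict Implicit. Unset Printing Implicit Defensive.
Import GRing.Theory.
Local Open Scope ring_scope.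

Section PowerSeries.
Variable F : fieldType.

Inductive pseries := PSeries of nat -> F.
Definition coefs (a : pseries) : nat -> F := let: PSeries f := a in f.

HB.instance Definition _ := gen_eqMixin pseries.
HB.instance Definition _ := gen_choiceMixin pseries.

Lemma pseriesP (a b : pseries) : (forall n, coefs a n = coefs b n) -> a = b.
Proof. by case: a b => [f] [g] /= H; congr PSeries; apply: funext. Qed.

Definition ps0 := PSeries (fun _ => 0).
Definition psadd a b := PSeries (fun n => coefs a n + coefs b n).
Definition psopp a := PSeries (fun n => - coefs a n).
Definition ps1 := PSeries (fun n => (n == 0)%:R).
Definition psmul a b :=
  PSeries (fun n => \sum_(i < n.+1) coefs a i * coefs b (n - i)).

Lemma psaddA : associative psadd.
Proof. by move=> a b c; apply: pseriesP => n /=; rewrite addrA. Qed.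
Lemma psaddC : commutative psadd.
Proof. by move=> a b; apply: pseriesP => n /=; rewrite addrC. Qed.
Lemma psadd0 : left_id ps0 psadd.
Proof. by move=> a; apply: pseriesP => n /=; rewrite add0r. Qed.
Lemma psaddN : left_inverse ps0 psopp psadd.
Proof. by move=> a; apply: pseriesP => n /=; rewrite addNr. Qed.

HB.instance Definition _ := GRing.isZmodule.Build pseries
  psaddA psaddC psadd0 psaddN.

Definition trunc m a : {poly F} := \poly_(i < m) coefs a i.

Lemma coef_truncM m a b n : (n < m)%N ->
  (trunc m a * trunc m b)`_n = coefs (psmul a b) n.
Proof.
move=> lt; rewrite coefM /=; apply: eq_bigr => i _.
by rewrite !coef_poly (leq_trans (ltn_ord i) lt) (leq_ltn_trans (leq_subr i n) lt).
Qed.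

Lemma coefM_take m (p q : {poly F}) n : (n < m)%N ->
  (p * take_poly m q)`_n = (p * q)`_n.
Proof.
move=> lt; rewrite !coefM; apply: eq_bigr => i _.
by rewrite coef_take_poly (leq_ltn_trans (leq_subr i n) lt).
Qed.

Lemma trunc_mul m a b : trunc m (psmul a b) = take_poly m (trunc m a * trunc m b).
Proof.
apply/polyP => n; rewrite coef_poly coef_take_poly; case: ifP => // lt.
by rewrite coef_truncM.
Qed.

Lemma psmulA : associative psmul.
Proof.
move=> a b c; apply: pseriesP => n.
have E1 : coefs (psmul a (psmul b c)) n =
    (trunc n.+1 a * (trunc n.+1 b * trunc n.+1 c))`_n.
  by rewrite -(coef_truncM a (psmul b c) (ltnSn n)) trunc_mul; apply: coefM_take.
have E2 : coefs (psmul (psmul a b) c) n =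
    (trunc n.+1 c * (trunc n.+1 a * trunc n.+1 b))`_n.
  by rewrite -(coef_truncM (psmul a b) c (ltnSn n)) trunc_mul mulrC; apply: coefM_take.
by rewrite E1 E2 [in RHS]mulrC mulrA.
Qed.

Lemma psmulC : commutative psmul.
Proof.
move=> a b; apply: pseriesP => n.
by rewrite -(coef_truncM a b (ltnSn n)) -(coef_truncM b a (ltnSn n)) mulrC.
Qed.

Lemma psmul1 : left_id ps1 psmul.
Proof.
move=> a; apply: pseriesP => n /=; rewrite big_ord_recl /= subn0 mul1r.
by rewrite big1 ?addr0 // => i _; rewrite mul0r.
Qed.

Lemma psmulDl : left_distributive psmul psadd.
Proof.
move=> a b c; apply: pseriesP => n /=; rewrite -big_split /=.
by apply: eq_bigr => i _; rewrite mulrDl.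
Qed.

Lemma ps1_neq0 : ps1 != ps0.
Proof.
apply/eqP => /(congr1 (fun a => coefs a 0)) /= /eqP.
by rewrite oner_eq0.
Qed.

HB.instance Definition _ := GRing.Zmodule_isComNzRing.Build pseries
  psmulA psmulC psmul1 psmulDl ps1_neq0.

Definition psunit : {pred pseries} := fun a => coefs a 0 != 0.

Fixpoint invl (a : pseries) n : seq F :=
  match n with
  | 0 => [:: (coefs a 0)^-1]
  | n'.+1 => let s := invl a n' in
      rcons s (- (coefs a 0)^-1 *
               \sum_(i < n'.+1) coefs a i.+1 * nth 0 s (n' - i))
  end.

Lemma size_invl a n : size (invl a n) = n.+1.
Proof. by elim: n => //= n IH; rewrite size_rcons IH. Qed.

Lemma nth_invl a n m : (m <= n)%N -> nth 0 (invl a n) m = nth 0 (invl a m) m.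
Proof.
elim: n m => [|n IH] m; first by rewrite leqn0 => /eqP->.
rewrite leq_eqVlt => /orP[/eqP->//|lt] /=.
by rewrite nth_rcons size_invl lt; apply: IH.
Qed.

Definition psinv a :=
  if a \in psunit then PSeries (fun n => nth 0 (invl a n) n) else a.

Lemma psmulV : {in psunit, left_inverse ps1 psinv psmul}.
Proof.
move=> a ua; rewrite psmulC /psinv ua; apply: pseriesP => n /=.
case: n => [|n]; first by rewrite big_ord1 /= mulfV.
rewrite big_ord_recl /= subn0 nth_rcons size_invl ltnn eqxx.
rewrite mulrA mulrN mulfV // mulN1r.
set S := (X in - X + _); set S' := (X in _ + X).
suff -> : S' = S by rewrite addNr.
apply: eq_bigr => i _; rewrite subSS; congr (_ * _).
by rewrite [RHS]nth_invl ?leq_subr.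
Qed.

Lemma psunitPl : forall x y, psmul y x = ps1 -> x \in psunit.
Proof.
move=> x y /(congr1 (fun a => coefs a 0)) /=; rewrite big_ord1 subnn => h.
rewrite unfold_in /=; apply/eqP => x0; move: h; rewrite x0 mulr0 => /eqP.
by rewrite eq_sym oner_eq0.
Qed.

Lemma psinv_out : {in [predC psunit], psinv =1 id}.
Proof. by move=> a; rewrite inE => /negbTE h; rewrite /psinv h. Qed.

HB.instance Definition _ := GRing.ComNzRing_hasMulInverse.Build pseries
  psmulV psunitPl psinv_out.

Lemma ps_neq0 a : a != ps0 -> exists i, coefs a i != 0.
Proof.
move=> an; apply: contrapT => H; move: an; apply/negP; rewrite negbK; apply/eqP.
apply: pseriesP => i /=; case: (eqVneq (coefs a i) 0) => // h.
by exfalso; apply: H; exists i.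
Qed.

Lemma ps_idomain_aux a b : psmul a b = ps0 -> (a == ps0) || (b == ps0).
Proof.
move=> ab0; case: (eqVneq a ps0) => //= /ps_neq0 exa.
case: (eqVneq b ps0) => //= /ps_neq0 exb; exfalso.
case: (ex_minnP exa) => i ai mini; case: (ex_minnP exb) => j bj minj.
move/(congr1 (fun c => coefs c (i + j)%N)): ab0 => /=.
have lti : (i < (i + j).+1)%N by rewrite ltnS leq_addr.
rewrite (bigD1 (Ordinal lti)) //= big1 ?addr0 ?addKn; last first.
  move=> k /eqP /= nek; case: (ltngtP k i) => [lt|gt|eq].
  - have : coefs a k == 0 by apply: contraTT lt; rewrite -leqNgt; apply: mini.
    by move/eqP->; rewrite mul0r.
  - have : coefs b (i + j - k) == 0.
      apply: contraTT gt; rewrite -leqNgt => /minj.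
      rewrite leq_subRL; last by rewrite -ltnS (ltn_ord k).
      by rewrite leq_add2r.
    by move/eqP->; rewrite mulr0.
  - by exfalso; apply: nek; apply: val_inj.
by move/eqP; rewrite mulf_eq0 (negbTE ai) (negbTE bj).
Qed.

Lemma ps_idomain : GRing.integral_domain_axiom pseries.
Proof. exact: ps_idomain_aux. Qed.

HB.instance Definition _ := GRing.ComUnitRing_isIntegral.Build pseries
  ps_idomain.

Definition ps_t : pseries := PSeries (fun n => (n == 1)%:R).

End PowerSeries.

Notation laurent F := {fraction (pseries F)}.

Section PGL2.
Variable F : fieldType.
Local Notation K := (laurent F).

Definition toK (x : pseries F) : K := @FracField.tofrac (pseries F) x.

Definition tK : K := toK (ps_t F).

Definition inO (x : K) : Prop := exists a : pseries F, x = toK a.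

Definition mx22 (a b c d : K) : 'M[K]_2 :=
  \matrix_(i < 2, j < 2)
    if i == ord0 then (if j == ord0 then a else b) else (if j == ord0 then c else d).

Definition inI0 (M : 'M[K]_2) : Prop :=
  exists a b c d, [/\ inO a, inO b, inO c, inO d &
    M = mx22 (1 + tK * a) b (tK * c) (1 + tK * d)].

Definition sigma : 'M[K]_2 := mx22 0 1 tK 0.

Definition upper (M : 'M[K]_2) : Prop := M 1 0 = 0.

(* preimage in GL_2(K) of the subgroup A of PGL_2(K) generated by (the images
   of) I^0 and sigma: the subgroup of GL_2(K) generated by I^0, sigma and the
   nonzero scalar matrices (the kernel of GL_2 -> PGL_2). *)
Inductive inA : 'M[K]_2 -> Prop :=
| inA_scalar (c : K) : c != 0 -> inA c%:M
| inA_I0 M : inI0 M -> inA M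
| inA_sigma : inA sigma
| inA_mul M N : inA M -> inA N -> inA (M *m N)
| inA_inv M : M \in unitmx -> inA M -> inA (invmx M).

End PGL2.

(* A factorization g = b a with b upper triangular exists as soon as the
   bottom row of g is proportional to the bottom row of an invertible a in A:
   then the bottom row of g a^-1 is proportional to (0, 1).  Clearing
   denominators and dividing by a power of t, every row is proportional to
   some (p, q) with p, q in O, one of them a unit.  If p is a unit, (p, q) is
   proportional to the bottom row (t, t q/p) of sigma [1 q/p; 0 1]; otherwise
   q is a unit, p is in tO, and (p, q) is proportional to the bottom row of
   [1 0; p/q 1], which lies in I^0. *)
From HB Require Import structures.
From mathcomp Require Import all_boot all_order all_algebra.
From mathcomp Require Import generic_quotient ring.
Set Implicit Arguments. Unset Strict Implicit. Unset Printing Implicit Defensive.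
Import GRing.Theory.
Local Open Scope ring_scope.
Local Open Scope quotient_scope.

Lemma fracE (R : idomainType) (x : {fraction R}) :
  exists p q : R, q != 0 /\ x = tofrac p / tofrac q.
Proof.
elim/quotW: x => r; exists \n_r, \d_r; split; first exact: denom_ratioP.
apply: (canRL (mulfK _)); first by rewrite tofrac_eq0 denom_ratioP.
change (FracField.mul (\pi_(FracField.type R) r) (tofrac \d_r) = tofrac \n_r).
rewrite !piE; apply/eqmodP; rewrite /= FracField.equivfE /FracField.mulf /=.
have n1 := numer_Ratio _ (oner_neq0 R); have d1 := denom_Ratio _ (oner_neq0 R).
by rewrite !n1 !d1 mulr1 numer_Ratio ?denom_Ratio ?mulr1 ?denom_ratioP // mulrC.
Qed.

Lemma divf_mulr_cancel (R : fieldType) (a b c : R) :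
  c != 0 -> a / b = (b * c)^-1 * (a * c).
Proof. by move=> c0; rewrite invfM mulrACA mulVf // mulr1 mulrC. Qed.

Lemma row_mul_invmx (R : comUnitRingType) n (g a : 'M[R]_n) i l :
  a \in unitmx -> row i g = l *: row i a -> row i (g *m invmx a) = l *: row i 1%:M.
Proof. by move=> ua gia; rewrite row_mul gia -scalemxAl -row_mul mulmxV. Qed.

Section PowerSeries.
Variable F : fieldType.
Local Notation O := (pseries F).

Definition pshift (a : O) : O := PSeries (fun n => coefs a n.+1).

Lemma coefs_tmul (a : O) n :
  coefs (ps_t F * a) n = if n is n'.+1 then coefs a n' else 0.
Proof.
rewrite /= big_ord_recl /= mul0r add0r; case: n => [|n]; first by rewrite big_ord0.
rewrite big_ord_recl /= mul1r subSS subn0 big1 ?addr0 // => i _.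
by rewrite mul0r.
Qed.

Lemma pshiftK (a : O) : coefs a 0 = 0 -> ps_t F * pshift a = a.
Proof. by move=> a0; apply: pseriesP => n; rewrite coefs_tmul; case: n. Qed.

Lemma toK_eq0 (a : O) : (toK a == 0) = (a == 0).
Proof. exact: tofrac_eq0. Qed.

Lemma toKM (a b : O) : toK (a * b) = toK a * toK b.
Proof. exact: rmorphM. Qed.

Lemma tK_neq0 : tK F != 0.
Proof.
rewrite toK_eq0; apply/eqP => /(congr1 (fun a => coefs a 1)) /=.
by move/eqP; rewrite oner_eq0.
Qed.

End PowerSeries.

Section BottomRows.
Variable F : fieldType.
Local Notation K := (laurent F).
Local Notation O := (pseries F).

Lemma mx22_mul (a b c d a' b' c' d' : K) :
  mx22 a b c d *m mx22 a' b' c' d' =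
  mx22 (a * a' + b * c') (a * b' + b * d') (c * a' + d * c') (c * b' + d * d').
Proof.
apply/matrixP => i j; rewrite !mxE !big_ord_recr big_ord0 /= !mxE.
by case: i => [[|[|i]] //=] ?; case: j => [[|[|j]] //=] ?; rewrite add0r.
Qed.

Lemma mx22_id : 1%:M = mx22 1 0 0 1 :> 'M[K]_2.
Proof.
apply/matrixP => i j; rewrite !mxE.
by case: i => [[|[|i]] //=] ?; case: j => [[|[|j]] //=] ?.
Qed.

Lemma unitmx_sigma : sigma F \in unitmx.
Proof.
apply: (proj1 (@mulmx1_unit _ _ _ (mx22 0 (tK F)^-1 1 0) _)).
rewrite /sigma mx22_mul mx22_id; congr mx22; [ring | ring | ring |].
by rewrite mulfV ?tK_neq0 // mul0r addr0.
Qed.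

Lemma unitmx_upper_unipotent (b : K) : mx22 1 b 0 1 \in unitmx.
Proof.
apply: (proj1 (@mulmx1_unit _ _ _ (mx22 1 (- b) 0 1) _)).
by rewrite mx22_mul mx22_id; congr mx22; ring.
Qed.

Lemma unitmx_lower_unipotent (c : K) : mx22 1 0 c 1 \in unitmx.
Proof.
apply: (proj1 (@mulmx1_unit _ _ _ (mx22 1 0 (- c) 1) _)).
by rewrite mx22_mul mx22_id; congr mx22; ring.
Qed.

Lemma inO0 : @inO F 0.
Proof. by exists 0; rewrite /toK tofrac0. Qed.

Lemma inA_upper_unipotent (b : K) : inO b -> inA (mx22 1 b 0 1).
Proof.
move=> Ob; apply: inA_I0; exists 0, b, 0, 0.
by split; rewrite ?mulr0 ?addr0 //; exact: inO0.
Qed.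

Lemma inA_lower_unipotent (c : K) : inO c -> inA (mx22 1 0 (tK F * c) 1).
Proof.
move=> Oc; apply: inA_I0; exists 0, 0, c, 0.
by split; rewrite ?mulr0 ?addr0 //; exact: inO0.
Qed.

Definition A_bottom_row (x y : K) := exists (a : 'M[K]_2) (l : K),
  [/\ inA a, a \in unitmx, x = l * a 1 0 & y = l * a 1 1].

Lemma A_bottom_rowZ (c x y : K) :
  A_bottom_row x y -> A_bottom_row (c * x) (c * y).
Proof.
by move=> [a [l [Aa ua -> ->]]]; exists a, (c * l); rewrite !mulrA.
Qed.

Lemma A_bottom_row0 : A_bottom_row 0 0.
Proof.
exists 1%:M, 0; rewrite !mul0r; split=> //; last exact: unitmx1.
exact: inA_scalar (oner_neq0 _).
Qed.

Lemma A_bottom_row_unitl (p q : O) :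
  coefs p 0 != 0 -> A_bottom_row (toK p) (toK q).
Proof.
move=> p0; have pK0 : toK p != 0 by rewrite toK_eq0; apply: contraNneq p0 => ->.
set b := toK (q * p^-1).
have Eb : b = toK q / toK p by rewrite /b /toK rmorphM rmorphV.
have sigmaU : sigma F *m mx22 1 b 0 1 = mx22 0 1 (tK F) (tK F * b).
  by rewrite /sigma mx22_mul; congr mx22; ring.
exists (sigma F *m mx22 1 b 0 1), (toK p / tK F); split.
- by apply: inA_mul; [exact: inA_sigma | apply: inA_upper_unipotent; exists (q * p^-1)].
- by rewrite unitmx_mul unitmx_sigma unitmx_upper_unipotent.
- by rewrite sigmaU !mxE /= divfK ?tK_neq0.
- by rewrite sigmaU !mxE /= mulrA divfK ?tK_neq0 // Eb mulrC divfK.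
Qed.

Lemma A_bottom_row_tO_unitr (p q : O) :
  coefs p 0 = 0 -> coefs q 0 != 0 -> A_bottom_row (toK p) (toK q).
Proof.
move=> p0 q0; have qK0 : toK q != 0 by rewrite toK_eq0; apply: contraNneq q0 => ->.
set c := toK (pshift p * q^-1).
have Ec : tK F * c = toK p / toK q.
  by rewrite /c /tK /toK rmorphM rmorphV // mulrA -rmorphM pshiftK.
exists (mx22 1 0 (tK F * c) 1), (toK q); split.
- by apply: inA_lower_unipotent; exists (pshift p * q^-1).
- exact: unitmx_lower_unipotent.
- by rewrite !mxE /= Ec mulrC divfK.
- by rewrite !mxE /= mulr1.
Qed.

Lemma A_bottom_row_coef_neq0 (k : nat) (p q : O) :
  coefs p k != 0 \/ coefs q k != 0 -> A_bottom_row (toK p) (toK q).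
Proof.
elim: k p q => [|k IH] p q pqk.
all: have [p0|] := eqVneq (coefs p 0) 0; last exact: A_bottom_row_unitl.
all: have [q0|] := eqVneq (coefs q 0) 0; last exact: A_bottom_row_tO_unitr.
  by case: pqk; rewrite ?p0 ?q0 eqxx.
rewrite -(pshiftK p0) -(pshiftK q0) !toKM.
apply: A_bottom_rowZ; exact: IH.
Qed.

Lemma A_bottom_row_pseries (p q : O) : A_bottom_row (toK p) (toK q).
Proof.
have [/andP[/eqP-> /eqP->]|] := boolP ((p == 0) && (q == 0)).
  by rewrite /toK tofrac0; exact: A_bottom_row0.
rewrite negb_and => /orP[/ps_neq0[k pk] | /ps_neq0[k qk]].
  by apply: (A_bottom_row_coef_neq0 (k := k)); left.
by apply: (A_bottom_row_coef_neq0 (k := k)); right.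
Qed.

Lemma A_bottom_row_all (x y : K) : A_bottom_row x y.
Proof.
have toK_frac (z : K) : exists p q : O, q != 0 /\ z = toK p / toK q := fracE z.
have [p1 [q1 [q1n ->]]] := toK_frac x; have [p2 [q2 [q2n ->]]] := toK_frac y.
have q1K : toK q1 != 0 by rewrite toK_eq0.
have q2K : toK q2 != 0 by rewrite toK_eq0.
rewrite (divf_mulr_cancel (toK p1) (toK q1) q2K) (divf_mulr_cancel (toK p2) (toK q2) q1K).
rewrite [toK q2 * toK q1]mulrC -!toKM.
by apply: A_bottom_rowZ; apply: A_bottom_row_pseries.
Qed.

End BottomRows.

Theorem mainTheorem2 (F : finFieldType) (g : 'M[laurent F]_2) :
  g \in unitmx ->
  exists (b a : 'M[laurent F]_2),
    [/\ b \in unitmx, upper b, inA a & g = b *m a].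
Proof.
move=> ug; have [a [l [Aa ua g10 g11]]] := A_bottom_row_all (g 1 0) (g 1 1).
have g_row : row 1 g = l *: row 1 a.
  apply/rowP => j; rewrite !mxE.
  have [->|->] : j = 0 \/ j = 1 by case: j => -[|[|//]] ?; [left | right]; apply: val_inj.
    exact: g10.
  exact: g11.
exists (g *m invmx a), a; split.
- by rewrite unitmx_mul ug unitmx_inv ua.
- have := congr1 (fun v : 'rV_2 => v 0 0) (row_mul_invmx ua g_row).
  by rewrite /upper !mxE /= mulr0.
- exact: Aa.
- by rewrite mulmxKV.
Qed.
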